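(* Let $(P,\le,A_1\ldots A_k)$ be a regular poset, let $t\in[3,k]$, and suppose $A_t$ is inserted between two antichains $A_p\sqsubset A_s$ that are consecutive in $(\{A_1,\dots,A_{t-1}\},\sqsubseteq)$ (so that $A_p\sqsubset A_t\sqsubset A_s$ are consecutive in $(\{A_1,\dots,A_t\},\sqsubseteq)$). Then for every node $M$ of $(A_p,A_t,<)$ or of $(A_t,A_s,<)$ there is a unique node $N$ of $(A_p,A_s,<)$ such that $\mathrm{Int}(M)\subset\mathrm{Int}(N)$.
   Context: Let $(P,\le)$ be a finite poset of width $w$. For $A\subseteq P$ let $A{\uparrow}=\{y\in P: x\le y\text{ for some }x\in A\}$ and $A{\downarrow}=\{y\in P: y\le x\text{ for some }x\in A\}$. For maximal antichains $A,B$ write $A\sqsubseteq B$ if $A\subseteq B{\downarrow}$, and $A\sqsubset B$ if also $A\ne B$. For disjoint antichains $A\sqsubset B$, $(A,B,<)$ denotes the bipartite graph with classes $A,B$ and an edge $(a<b)$ for each $a\in A$, $b\in B$ with $a<b$; it is regular if every edge lies in some perfect matching. A regular poset is a triple $(P,\le,A_1\ldots A_k)$ where $A_1,\dots,A_k$ are maximum antichains of $P$ such that: they partition $P$; $(\{A_1,\dots,A_k\},\sqsubseteq)$ is a linear order with minimum $A_1$ and maximum $A_2$; $a<b$ for all $a\in A_1$, $b\in A_2$; and for every $t\in[2,k]$ and every two antichains $A_p\sqsubset A_s$ consecutive in $(\{A_1,\dots,A_t\},\sqsubseteq)$, the bipartite graph $(A_p,A_s,<)$ is regular. For two such consecutive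 antichains $A_p\sqsubset A_s$, a node of $(A_p,A_s,<)$ is a bipartite graph $(X,Y,<)$ with $X\subseteq A_p$, $Y\subseteq A_s$ and $X\cup Y$ the vertex set of a connected component of $(A_p,A_s,<)$. For a node $N=(X,Y,<)$, $\mathrm{Int}(N)=X{\uparrow}\cap Y{\downarrow}$. *)

From mathcomp Require Import all_boot all_order.
Set Implicit Arguments. Unset Strict Implicit. Unset Printing Implicit Defensive.
Import Order.TTheory.
Local Open Scope order_scope.

Section RegularPoset.
Context {disp : Order.disp_t} {T : finPOrderType disp}.

Definition antichain (A : {set T}) : bool :=
  [forall x in A, forall y in A, (x <= y) ==> (x == y)].

Definition width : nat := \max_(B : {set T} | antichain B) #|B|.

Definition maximum_antichain (A : {set T}) : bool :=
  antichain A && (#|A| == width).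

Definition upset (A : {set T}) : {set T} := [set y | [exists x in A, x <= y]].
Definition downset (A : {set T}) : {set T} := [set y | [exists x in A, y <= x]].

Definition sqle (A B : {set T}) : bool := A \subset downset B.
Definition sqlt (A B : {set T}) : bool := sqle A B && (A != B).

Definition bip_edges (A B : {set T}) : {set T * T} :=
  [set e | [&& e.1 \in A, e.2 \in B & e.1 < e.2]].

Definition perfect_matching (A B : {set T}) (M : {set T * T}) : Prop :=
  M \subset bip_edges A B /\
  (forall a, a \in A -> #|[set e in M | e.1 == a]| = 1) /\
  (forall b, b \in B -> #|[set e in M | e.2 == b]| = 1).

Definition regular_bip (A B : {set T}) : Prop :=
  forall e, e \in bip_edges A B ->
    exists M, perfect_matching A B M /\ e \in M.

Definition bip_adj (A B : {set T}) : rel T :=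
  fun x y => [|| [&& x \in A, y \in B & x < y] | [&& y \in A, x \in B & y < x]].

Definition is_node (A B X Y : {set T}) : Prop :=
  X \subset A /\ Y \subset B /\
  exists2 v, v \in A :|: B & X :|: Y = [set y | connect (bip_adj A B) v y].

Definition Int (X Y : {set T}) : {set T} := upset X :&: downset Y.

Definition consecutive (A : nat -> {set T}) (t p s : nat) : Prop :=
  [/\ 1 <= p <= t, 1 <= s <= t, sqlt (A p) (A s) &
      forall q, 1 <= q <= t -> ~~ (sqlt (A p) (A q) && sqlt (A q) (A s))]%N.

Definition regular_poset (A : nat -> {set T}) (k : nat) : Prop :=
  (forall i, (1 <= i <= k)%N -> maximum_antichain (A i)) /\
  (forall i, (1 <= i <= k)%N -> A i != set0) /\
  (forall i j, (1 <= i <= k)%N -> (1 <= j <= k)%N -> i != j ->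
      [disjoint A i & A j]) /\
  (forall x : T, exists2 i, (1 <= i <= k)%N & x \in A i) /\
  (forall i j, (1 <= i <= k)%N -> (1 <= j <= k)%N ->
      sqle (A i) (A j) || sqle (A j) (A i)) /\
  (forall i, (1 <= i <= k)%N -> sqle (A 1%N) (A i) /\ sqle (A i) (A 2%N)) /\
  (forall a b, a \in A 1%N -> b \in A 2%N -> a < b) /\
  (forall t p s, (2 <= t <= k)%N -> consecutive A t p s ->
      regular_bip (A p) (A s)).

End RegularPoset.

From mathcomp Require Import all_boot all_order zify.
Import Order.TTheory.
Local Open Scope order_scope.

(* Every element of A_t lies above some element of A_p and below some element
   of A_s (A_p, A_t, A_s are maximum antichains and A_p ⊏ A_t ⊏ A_s), so every
   edge a < b of (A_p,A_t,<) or (A_t,A_s,<) widens to an edge a' <= a < b <= b'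
   of (A_p,A_s,<).  Hence a node M is carried into a single node N of
   (A_p,A_s,<), and Int(M) ⊆ Int(N).  For uniqueness, Int(M) is nonempty, and
   a point of Int(N) ∩ Int(N') yields an edge between N and N', so N = N'. *)

Lemma connect_transport {T : finType} {e f rho : rel T} {x y wx} :
  (forall u v wu, e u v -> rho u wu -> exists2 wv, rho v wv & connect f wu wv) ->
  connect e x y -> rho x wx -> exists2 wy, rho y wy & connect f wx wy.
Proof.
move=> step /connectP[p ep ->{y}]; elim: p x wx ep => [|z p IHp] x wx /=.
  by move=> _ rx; exists wx.
case/andP=> exz ep rx; have [wz rz fxz] := step _ _ _ exz rx.
have [wy ry fzy] := IHp z wz ep rz.
by exists wy => //; apply: connect_trans fxz fzy.
Qed.

Section RegularPosetNodes.
Context {disp : Order.disp_t} {T : finPOrderType disp}.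
Implicit Types (A B Ap As X Y : {set T}) (u v w x y z : T).

Lemma upsetP A y : reflect (exists2 x, x \in A & x <= y) (y \in upset A).
Proof. by rewrite inE; apply: exists_inP. Qed.

Lemma downsetP A x : reflect (exists2 y, y \in A & x <= y) (x \in downset A).
Proof. by rewrite inE; apply: exists_inP. Qed.

Lemma sub_upset A : A \subset upset A.
Proof. by apply/subsetP => x xA; apply/upsetP; exists x. Qed.

Lemma sub_downset A : A \subset downset A.
Proof. by apply/subsetP => x xA; apply/downsetP; exists x. Qed.

Lemma IntP X Y z :
  reflect ((exists2 x, x \in X & x <= z) /\ (exists2 y, y \in Y & z <= y))
          (z \in Int X Y).
Proof. by rewrite inE; apply: (iffP andP) => -[/upsetP ? /downsetP ?]. Qed.

Lemma antichainP A : reflect {in A &, forall x y, x <= y -> x = y} (antichain A).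
Proof.
apply: (iffP forall_inP) => [anti x y xA yA xy | anti x xA].
  by apply/eqP; move/forall_inP: (anti x xA) => /(_ y yA)/implyP; apply.
by apply/forall_inP => y yA; apply/implyP => /(anti x y xA yA) ->.
Qed.

(* Otherwise some b in B lies above no element of A, and b |: A is an
   antichain larger than A. *)
Lemma sqle_upset {A B} :
  maximum_antichain A -> maximum_antichain B -> sqle A B -> B \subset upset A.
Proof.
move=> /andP[/antichainP antiA /eqP cardA] /andP[/antichainP antiB _] sAB.
apply/subsetP => b bB; apply: contraT => bNup.
have bNA : b \notin A by apply: contra bNup => bA; apply/upsetP; exists b.
have anti_bA : antichain (b |: A).
  apply/antichainP => x y /setU1P[->|xA] /setU1P[->|yA] xy //.
  - have /downsetP[b' b'B yb'] := subsetP sAB y yA.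
    have bb' : b = b' := antiB b b' bB b'B (le_trans xy yb').
    by apply/le_anti; rewrite xy bb'.
  - by case/negP: bNup; apply/upsetP; exists x.
  - exact: antiA.
have := @leq_bigmax_cond _ antichain (fun C : {set T} => #|C|) _ anti_bA.
by rewrite -/width -cardA cardsU1 bNA ltnn.
Qed.

Lemma disjoint_le_lt {A B x y} :
  [disjoint A & B] -> x \in A -> y \in B -> x <= y -> x < y.
Proof.
move=> dAB xA yB xy; rewrite lt_def xy andbT.
by apply: contraTneq yB => ->; rewrite (disjointFr dAB xA).
Qed.

Definition bip_component A B v : {set T} := [set y | connect (bip_adj A B) v y].

Lemma mem_bip_component A B v y :
  (y \in bip_component A B v) = connect (bip_adj A B) v y.
Proof. by rewrite inE. Qed.

Lemma bip_adj_sym A B : symmetric (bip_adj A B).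
Proof. by move=> x y; rewrite /bip_adj orbC. Qed.

Lemma bip_adj_lt {A B x y} : x \in A -> y \in B -> x < y -> bip_adj A B x y.
Proof. by move=> xA yB xy; rewrite /bip_adj xA yB xy. Qed.

Lemma bip_component_eq {A B u v} :
  connect (bip_adj A B) u v -> bip_component A B u = bip_component A B v.
Proof.
move=> uv; apply/setP => y.
by rewrite !inE (same_connect (sym_connect_sym (@bip_adj_sym A B)) uv).
Qed.

Lemma bip_component_sub A B v :
  v \in A :|: B -> bip_component A B v \subset A :|: B.
Proof.
have closedAB : closed (bip_adj A B) (A :|: B).
  move=> x y /orP[] /and3P[xA yB _]; by rewrite !inE ?xA ?yB ?orbT.
by move=> vAB; apply/subsetP => y; rewrite inE => /(closed_connect closedAB) <-.
Qed.

Lemma is_node_component A B v : v \in A :|: B ->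
  is_node A B (bip_component A B v :&: A) (bip_component A B v :&: B).
Proof.
move=> vAB; split; first exact: subsetIr.
split; first exact: subsetIr.
by exists v; rewrite // -setIUr; apply/setIidPl/bip_component_sub.
Qed.

Lemma is_nodeE {A B X Y} : [disjoint A & B] -> is_node A B X Y ->
  exists2 v, v \in A :|: B &
    X = bip_component A B v :&: A /\ Y = bip_component A B v :&: B.
Proof.
move=> dAB [sXA [sYB [v vAB compXY]]]; exists v => //.
rewrite /bip_component -compXY !setIUl.
have dXB : [disjoint X & B] := disjointWl sXA dAB.
have dYA : [disjoint Y & A] by rewrite disjoint_sym (disjointWr sYB dAB).
by rewrite (setIidPl sXA) (setIidPl sYB) !disjoint_setI0 ?setU0 ?set0U.
Qed.

Lemma node_eq {A B X Y X' Y' z} :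
  [disjoint A & B] -> is_node A B X Y -> is_node A B X' Y' ->
  z \in Int X Y -> z \in Int X' Y' -> (X, Y) = (X', Y').
Proof.
move=> dAB /(is_nodeE dAB)[v _ [-> ->]] /(is_nodeE dAB)[v' _ [-> ->]].
case/IntP=> [[x /setIP[vx xA] xz] _] /IntP[_ [y /setIP[v'y yB] zy]].
have xy : bip_adj A B x y.
  exact: bip_adj_lt xA yB (disjoint_le_lt dAB xA yB (le_trans xz zy)).
move: vx v'y; rewrite !mem_bip_component => vx v'y.
by rewrite (bip_component_eq (connect_trans vx (connect1 xy))) (bip_component_eq v'y).
Qed.

Lemma node_Int_nonempty {A B X Y} :
  [disjoint A & B] -> A \subset downset B -> B \subset upset A ->
  is_node A B X Y -> exists z, z \in Int X Y.
Proof.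
move=> dAB sAB sBA /(is_nodeE dAB)[v vAB [-> ->]]; exists v.
have vv : v \in bip_component A B v by rewrite mem_bip_component connect0.
case/setUP: vAB => [vA | vB].
- have /downsetP[b bB vb] := subsetP sAB v vA.
  have vb_adj : bip_adj A B v b := bip_adj_lt vA bB (disjoint_le_lt dAB vA bB vb).
  apply/IntP; split; first by exists v; [apply/setIP | exact: lexx].
  by exists b => //; apply/setIP; rewrite mem_bip_component connect1.
- have /upsetP[a aA av] := subsetP sBA v vB.
  have av_adj : bip_adj A B a v := bip_adj_lt aA vB (disjoint_le_lt dAB aA vB av).
  apply/IntP; split; last by exists v; [apply/setIP | exact: lexx].
  by exists a => //; apply/setIP; rewrite mem_bip_component connect1 // bip_adj_sym.
Qed.

Section Shadow.
Context {A B Ap As : {set T}}.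
Hypotheses (dAB : [disjoint A & B])
           (sAAp : A \subset upset Ap) (sBAs : B \subset downset As).

(* An element of A is shadowed by the elements of Ap below it, an element of
   B by the elements of As above it; edges of (A,B,<) thus lift to edges of
   (Ap,As,<) between any of their shadows. *)
Definition shadow u w : bool :=
  [&& u \in A, w \in Ap & w <= u] || [&& u \in B, w \in As & u <= w].

Lemma shadowA {u w} : u \in A -> shadow u w -> (w \in Ap) && (w <= u).
Proof. by move=> uA; rewrite /shadow uA (disjointFr dAB uA) orbF. Qed.

Lemma shadowB {u w} : u \in B -> shadow u w -> (w \in As) && (u <= w).
Proof. by move=> uB; rewrite /shadow uB (disjointFl dAB uB). Qed.

Lemma shadow_mem {u w} : shadow u w -> w \in Ap :|: As.
Proof. by rewrite !inE => /orP[] /and3P[_ -> _]; rewrite ?orbT. Qed.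

Lemma shadow_exists {u} : u \in A :|: B -> exists w, shadow u w.
Proof.
case/setUP=> [uA | uB].
  have /upsetP[w wAp wu] := subsetP sAAp u uA.
  by exists w; rewrite /shadow uA wAp wu.
have /downsetP[w wAs uw] := subsetP sBAs u uB.
by exists w; rewrite /shadow uB wAs uw orbT.
Qed.

Lemma shadow_edge u v wu : bip_adj A B u v -> shadow u wu ->
  exists2 wv, shadow v wv & connect (bip_adj Ap As) wu wv.
Proof.
case/orP=> [/and3P[uA vB uv] | /and3P[vA uB vu]] swu.
- have /andP[wuAp wuu] := shadowA uA swu.
  have [wv swv] : exists wv, shadow v wv by apply: shadow_exists; rewrite inE vB orbT.
  have /andP[wvAs vwv] := shadowB vB swv.
  exists wv => //; apply/connect1/bip_adj_lt => //.
  exact: le_lt_trans wuu (lt_le_trans uv vwv).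
- have /andP[wuAs uwu] := shadowB uB swu.
  have [wv swv] : exists wv, shadow v wv by apply: shadow_exists; rewrite inE vA.
  have /andP[wvAp wvv] := shadowA vA swv.
  exists wv => //; apply/connect1; rewrite bip_adj_sym; apply/bip_adj_lt => //.
  exact: le_lt_trans wvv (lt_le_trans vu uwu).
Qed.

Lemma exists_node_Int_sub {X Y} : is_node A B X Y ->
  exists N : {set T} * {set T}, is_node Ap As N.1 N.2 /\ Int X Y \subset Int N.1 N.2.
Proof.
case/(is_nodeE dAB)=> v vAB [-> ->].
have [w0 vw0] := shadow_exists vAB.
have lift u : u \in bip_component A B v ->
    exists2 w, shadow u w & w \in bip_component Ap As w0.
  rewrite mem_bip_component => vu.
  have [w uw w0w] := connect_transport shadow_edge vu vw0.
  by exists w; rewrite ?mem_bip_component.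
exists (bip_component Ap As w0 :&: Ap, bip_component Ap As w0 :&: As).
split; first exact: is_node_component (shadow_mem vw0).
apply/subsetP => z /IntP[[x /setIP[vx xA] xz] [y /setIP[vy yB] zy]].
have [wx /(shadowA xA)/andP[wxAp wxx] w0wx] := lift x vx.
have [wy /(shadowB yB)/andP[wyAs ywy] w0wy] := lift y vy.
apply/IntP; split.
  by exists wx; [apply/setIP | exact: le_trans wxx xz].
by exists wy; [apply/setIP | exact: le_trans zy ywy].
Qed.

End Shadow.

Lemma exists_unique_node_Int_sub A B Ap As X Y :
  [disjoint A & B] -> [disjoint Ap & As] ->
  A \subset downset B -> B \subset upset A ->
  A \subset upset Ap -> B \subset downset As ->
  is_node A B X Y ->
  exists! N : {set T} * {set T}, is_node Ap As N.1 N.2 /\ Int X Y \subset Int N.1 N.2.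
Proof.
move=> dAB dApAs sAB sBA sAAp sBAs nodeXY.
have [z zXY] := node_Int_nonempty dAB sAB sBA nodeXY.
have [[N1 N2] [nodeN sXYN]] := exists_node_Int_sub dAB sAAp sBAs nodeXY.
exists (N1, N2); split=> // -[N1' N2'] [nodeN' sXYN'].
exact: node_eq dApAs nodeN nodeN' (subsetP sXYN z zXY) (subsetP sXYN' z zXY).
Qed.

End RegularPosetNodes.

Theorem proposition9 (disp : Order.disp_t) (T : finPOrderType disp)
  (k : nat) (A : nat -> {set T}) (t p s : nat) :
  regular_poset A k ->
  (3 <= t <= k)%N ->
  consecutive A t.-1 p s ->
  sqlt (A p) (A t) -> sqlt (A t) (A s) ->
  forall X Y : {set T},
    is_node (A p) (A t) X Y \/ is_node (A t) (A s) X Y ->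
    exists! N : {set T} * {set T},
      is_node (A p) (A s) N.1 N.2 /\ Int X Y \subset Int N.1 N.2.
Proof.
move=> [maxA [_ [disjA _]]] /andP[t3 tk] [/andP[p1 pt] /andP[s1 st] /andP[_ ApNAs] _]
  /andP[sApAt _] /andP[sAtAs _] X Y.
have pk : (1 <= p <= k)%N by lia.
have sk : (1 <= s <= k)%N by lia.
have tk' : (1 <= t <= k)%N by lia.
have dpt : [disjoint A p & A t] by apply: disjA => //; apply/eqP; lia.
have dts : [disjoint A t & A s] by apply: disjA => //; apply/eqP; lia.
have dps : [disjoint A p & A s] by apply: disjA => //; apply: contra ApNAs => /eqP ->.
have upt := sqle_upset (maxA p pk) (maxA t tk') sApAt.
have uts := sqle_upset (maxA t tk') (maxA s sk) sAtAs.
case=> [nodeXY | nodeXY].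
- exact: exists_unique_node_Int_sub dpt dps sApAt upt (sub_upset _) sAtAs nodeXY.
- exact: exists_unique_node_Int_sub dts dps sAtAs uts upt (sub_downset _) nodeXY.
Qed.
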